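(* For each integer $k\geq 2$ there is a finite algebra $\mathbf{A}$ with a $1$-pointed $k$-cube term whose growth rate satisfies $d_{\mathbf{A}}(n)\in \Theta(n^{k-1})$.
   Context: An algebra $\mathbf{A}$ has a $1$-pointed $k$-cube term if there is a term $F(x_1,\dots,x_m)$ in the language of $\mathbf{A}$ and a $k\times m$ matrix $M=[y_{i,j}]$ whose entries are variables and exactly one constant symbol (a nullary operation symbol of the language) such that every column of $M$ contains an entry different from the variable $x$ and the identities $F(y_{i,1},\dots,y_{i,m})\approx x$, $i=1,\dots,k$, hold in $\mathbf{A}$. $d_{\mathbf{A}}(n)$ is the least size of a generating set of $\mathbf{A}^n$. *)

From mathcomp Require Import all_boot.
From Stdlib Require Import ClassicalEpsilon.
Set Implicit Arguments. Unset Strict Implicit. Unset Printing Implicit Defensive.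

(* A finite algebra: finite (nonempty checked separately) carrier, finite
   language of operation symbols with arities, and interpretations. *)
Record algebra := Algebra {
  carrier : finType;
  sym : finType;
  arity : sym -> nat;
  op : forall f : sym, (arity f).-tuple carrier -> carrier }.

Inductive term (S : Type) (ar : S -> nat) (V : Type) : Type :=
  | tvar : V -> term ar V
  | tapp (f : S) : ('I_(ar f) -> term ar V) -> term ar V.
Arguments tvar {S ar V}.
Arguments tapp {S ar V}.

Fixpoint tsubst (S : Type) (ar : S -> nat) (V W : Type)
  (s : V -> term ar W) (t : term ar V) : term ar W :=
  match t with
  | tvar v => s v
  | tapp f ts => tapp f (fun i => tsubst s (ts i))
  end.

Fixpoint teval (A : algebra) (V : Type) (e : V -> carrier A)
  (t : term (@arity A) V) : carrier A :=
  match t with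
  | tvar v => e v
  | tapp f ts => op [tuple teval e (ts i) | i < arity f]
  end.

(* Entries of the matrix M: [Some v] is the variable v, [None] is the
   (single) constant symbol c (nullary, so the argument function is vacuous). *)
Definition cube_entry (A : algebra) (c : sym A) (x : nat) (y : option nat)
  : term (@arity A) nat :=
  match y with
  | Some v => tvar v
  | None => tapp c (fun _ => tvar x)
  end.

Definition has_1pointed_cube_term (A : algebra) (k : nat) : Prop :=
  exists (c : sym A), arity c = 0 /\
  exists (m : nat) (F : term (@arity A) 'I_m)
         (M : 'I_k -> 'I_m -> option nat) (x : nat),
    (exists i j, M i j = None) /\
    (forall j, exists i, M i j <> Some x) /\
    (forall (i : 'I_k) (e : nat -> carrier A),
        teval e (tsubst (fun j => cube_entry c x (M i j)) F) = e x).

Inductive in_sg (A : algebra) (n : nat) (S : {set {ffun 'I_n -> carrier A}})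
  : {ffun 'I_n -> carrier A} -> Prop :=
  | sg_base a : a \in S -> in_sg S a
  | sg_op (f : sym A) (args : 'I_(arity f) -> {ffun 'I_n -> carrier A}) :
      (forall i, in_sg S (args i)) ->
      in_sg S [ffun l => op [tuple args i l | i < arity f]].

Definition generates (A : algebra) (n : nat) (S : {set {ffun 'I_n -> carrier A}}) :=
  forall a, in_sg S a.

Definition decP (P : Prop) : bool :=
  if excluded_middle_informative P then true else false.

Lemma gen_exists (A : algebra) (n : nat) :
  exists d, decP (exists S : {set {ffun 'I_n -> carrier A}},
                    #|S| = d /\ generates S).
Proof.
exists #|[set: {ffun 'I_n -> carrier A}]|.
rewrite /decP; case: excluded_middle_informative => // [[]].
exists [set: {ffun 'I_n -> carrier A}]; split => // a.
by apply: sg_base; rewrite inE.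
Qed.

Definition dA (A : algebra) (n : nat) : nat := ex_minn (gen_exists A n).

From Pilot Require Import Defs.
From mathcomp Require Import all_boot zify.
From Stdlib Require Import ClassicalEpsilon.
Set Implicit Arguments. Unset Strict Implicit. Unset Printing Implicit Defensive.

(* The algebra on {0, 1, 2} with the constant 0 and one k-ary operation h:
   h is 2 if some argument is 2, 0 if all arguments are 0, 1 if exactly one
   argument is 0 and the others are 1, and 2 otherwise.  Then
   h(x, .., 0, .., x) = x is a 1-pointed k-cube identity.  An indicator
   vector of a (k-1)-element subset of n can only be produced by h from one of
   its own arguments (pigeonhole over the k argument positions), so it belongs
   to every generating set of A^n; conversely the indicator vectors of sets of
   size at most k-1 generate A^n.  Hence C(n, k-1) <= d_A(n) <= (n+1)^(k-1). *)

Lemma decPP (P : Prop) : reflect P (Defs.decP P).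
Proof. by rewrite /Defs.decP; case: excluded_middle_informative => H; constructor. Qed.

Lemma dA_le_card (A : algebra) n (S : {set {ffun 'I_n -> carrier A}}) :
  generates S -> dA A n <= #|S|.
Proof. by move=> gS; rewrite /dA; case: ex_minnP => d _; apply; apply/decPP; exists S. Qed.

Lemma leq_dA (A : algebra) n d :
  (forall S : {set {ffun 'I_n -> carrier A}}, generates S -> d <= #|S|) ->
  d <= dA A n.
Proof. by move=> min_d; rewrite /dA; case: ex_minnP => d0 /decPP[S [<- /min_d]]. Qed.

Lemma in_sg_op (A : algebra) n (S : {set {ffun 'I_n -> carrier A}}) (f : sym A)
    (args : 'I_(arity f) -> {ffun 'I_n -> carrier A}) (v : {ffun 'I_n -> carrier A}) :
  (forall i, in_sg S (args i)) ->
  (forall l, op [tuple args i l | i < arity f] = v l) -> in_sg S v.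
Proof.
move=> sg_args opE; have -> : v = [ffun l => op [tuple args i l | i < arity f]].
  by apply/ffunP => l; rewrite ffunE opE.
exact: sg_op.
Qed.

Lemma leq_exp_ffact n k : 2 * k <= n -> n ^ k <= 2 ^ k * n ^_ k.
Proof.
elim: k => [|k IH] le2kn; first by rewrite ffactn0.
rewrite ffactnSr expnSr (expnSr 2) mulnACA.
apply: leq_mul; first by apply: IH; lia.
by rewrite mulnC; lia.
Qed.

Lemma leq_exp_bin n k : 2 * k <= n -> n ^ k <= 2 ^ k * k`! * 'C(n, k).
Proof. by move=> le2kn; rewrite -mulnA [k`! * _]mulnC bin_ffact leq_exp_ffact. Qed.

Lemma set_codom_option d n (T : {set 'I_n}) : #|T| <= d ->
  exists f : {ffun 'I_d -> option 'I_n}, T = [set i | Some i \in codom f].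
Proof.
move=> leTd; pose s := [seq Some x | x <- enum T].
have s_size : size s = #|T| by rewrite size_map cardE.
have mem_s i : (Some i \in s) = (i \in T).
  by rewrite mem_map ?mem_enum // => x y [].
exists [ffun j : 'I_d => nth None s j]; apply/setP => i; rewrite inE -mem_s.
apply/idP/codomP => [s_i | [j]].
  have lt_id : index (Some i) s < d by rewrite (leq_trans _ leTd) // -s_size index_mem.
  by exists (Ordinal lt_id); rewrite ffunE nth_index.
rewrite ffunE; case: (ltnP j (size s)) => [lt_js -> | le_sj]; first exact: mem_nth.
by rewrite nth_default.
Qed.

Definition zero3 : 'I_3 := ord0.
Definition one3 : 'I_3 := Ordinal (isT : 1 < 3).
Definition two3 : 'I_3 := Ordinal (isT : 2 < 3).

Lemma ord3P (x : 'I_3) : [\/ x = zero3, x = one3 | x = two3].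
Proof. by case: x => [[|[|[|//]]] ?]; [apply: Or31 | apply: Or32 | apply: Or33]; apply: val_inj. Qed.

Definition ind n (T : {set 'I_n}) : {ffun 'I_n -> 'I_3} :=
  [ffun l => if l \in T then one3 else zero3].

Lemma ind_inj n : injective (@ind n).
Proof.
move=> T1 T2 /ffunP eqT; apply/setP => l.
by move: (eqT l); rewrite !ffunE; do 2 case: (_ \in _).
Qed.

Section CubeAlgebra.

Variable m : nat.
Local Notation k := m.+2.

Definition hop (f : 'I_k -> 'I_3) : 'I_3 :=
  if [exists i, f i == two3] then two3
  else if [forall i, f i == zero3] then zero3
  else if #|[set i | f i == zero3]| == 1 then one3 else two3.

Lemma eq_hop f g : f =1 g -> hop f = hop g.
Proof.
move=> fg; rewrite /hop; under eq_existsb do rewrite fg.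
by under eq_forallb do rewrite fg; under eq_finset do rewrite fg.
Qed.

Lemma hop_two f i : f i = two3 -> hop f = two3.
Proof. by move=> fi; rewrite /hop ifT //; apply/existsP; exists i; rewrite fi. Qed.

Lemma hop_eq0 f : hop f = zero3 <-> forall i, f i = zero3.
Proof.
split=> [|f0]; last first.
  rewrite /hop ifN; first by rewrite ifT //; apply/forallP => i; rewrite f0.
  by apply/existsPn => i; rewrite f0.
rewrite /hop; case: existsP => // _; case: forallP => [f0 _ i | _]; first exact/eqP.
by case: ifP.
Qed.

Lemma hop_eq1 f :
  hop f = one3 <-> exists i, forall j, f j = if j == i then zero3 else one3.
Proof.
split=> [|[i fE]].
  rewrite /hop; case: existsP => // no2; case: forallP => // _.
  case: ifP => // /cards1P[i Z] _; exists i => j.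
  move/setP/(_ j): Z; rewrite !inE.
  case: (ord3P (f j)) => fj; rewrite fj ?eqxx; [by move<- | by move<- |].
  by case: no2; exists j; rewrite fj.
rewrite /hop ifN; last by apply/existsPn => j; rewrite fE; case: ifP.
rewrite ifN; last first.
  apply/forallPn; exists (lift i ord0).
  by rewrite fE [_ == i]eq_sym (negbTE (neq_lift _ _)).
have -> : [set j | f j == zero3] = [set i].
  by apply/setP => j; rewrite !inE fE; case: ifP.
by rewrite cards1.
Qed.

Lemma hop_ones f : (forall i, f i = one3) -> hop f = two3.
Proof.
move=> f1; rewrite /hop ifN; last by apply/existsPn => i; rewrite f1.
rewrite ifN; last by apply/forallPn; exists ord0; rewrite f1.
have -> : [set i | f i == zero3] = set0 by apply/setP => i; rewrite !inE f1.
by rewrite cards0.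
Qed.

Lemma hop_cube (x : 'I_3) i : hop (fun j => if i == j then zero3 else x) = x.
Proof.
case: (ord3P x) => ->.
- by apply/hop_eq0 => j; case: ifP.
- by apply/hop_eq1; exists i => j; rewrite eq_sym.
- by apply: (@hop_two _ (lift i ord0)); rewrite (negbTE (neq_lift _ _)).
Qed.

Definition cube_arity (b : bool) : nat := if b then k else 0.

Definition cube_op (b : bool) : (cube_arity b).-tuple 'I_3 -> 'I_3 :=
  if b return (cube_arity b).-tuple 'I_3 -> 'I_3
  then fun t => hop (tnth t) else fun _ => zero3.

Definition cube_alg : algebra := @Algebra 'I_3 bool cube_arity cube_op.

Lemma cube_alg_cube_term : has_1pointed_cube_term cube_alg k.
Proof.
exists false; split => //.
exists k, (@tapp _ (@arity cube_alg) _ true tvar).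
exists (fun i j => if i == j then None else Some 0), 0.
split; first by exists ord0, ord0; rewrite eqxx.
split; first by move=> j; exists j; rewrite eqxx.
move=> i e /=; rewrite -[RHS](hop_cube _ i); apply: eq_hop => j.
by rewrite tnth_mktuple; case: (i == j).
Qed.

Lemma in_sg_hop n (S : {set {ffun 'I_n -> carrier cube_alg}})
    (args : 'I_k -> {ffun 'I_n -> 'I_3}) (v : {ffun 'I_n -> 'I_3}) :
  (forall i, in_sg S (args i)) ->
  (forall l, hop (fun i => args i l) = v l) -> in_sg S v.
Proof.
move=> sg_args hopE; apply: (@in_sg_op cube_alg n S true args) => // l.
by rewrite -hopE; apply: eq_hop => i; rewrite tnth_mktuple.
Qed.

Lemma hop_ind_arg n (T : {set 'I_n}) (args : 'I_k -> {ffun 'I_n -> 'I_3}) :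
  #|T| < k -> (forall l, hop (fun i => args i l) = ind T l) ->
  exists j, args j = ind T.
Proof.
move=> ltTk hopE.
have single_zero l : l \in T ->
    exists i, forall j, args j l = if j == i then zero3 else one3.
  by move=> lT; apply/hop_eq1; rewrite hopE ffunE lT.
pose g l := odflt ord0 [pick i | args i l == zero3].
have /subsetPn[j _ jNg] : ~~ ([set: 'I_k] \subset g @: T).
  apply: contraTN ltTk => /subset_leq_card; rewrite cardsT card_ord -leqNgt.
  by move/leq_trans; apply; apply: leq_imset_card.
exists j; apply/ffunP => l; rewrite ffunE; case: ifP => lT; last first.
  by move: (hopE l); rewrite ffunE lT => /hop_eq0.
have [i argsE] := single_zero l lT.
have gl : g l = i.
  rewrite /g; case: pickP => [i' | /(_ i)]; rewrite argsE ?eqxx //.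
  by case: (i' =P i) => [-> | //].
rewrite argsE; case: eqP => // ji.
by case/negP: jNg; rewrite ji -gl imset_f.
Qed.

Lemma ind_mem_generators n (S : {set {ffun 'I_n -> carrier cube_alg}})
    (T : {set 'I_n}) :
  #|T| = m.+1 -> in_sg S (ind T) -> ind T \in S.
Proof.
move=> cardT; move Ea: (ind T) => a sg_a.
elim: sg_a Ea => [b bS _ // | [] args _ IH E].
  have [j aj] : exists j, args j = ind T.
    apply: hop_ind_arg => [|l]; first by rewrite cardT.
    by rewrite E ffunE; apply: eq_hop => i; rewrite tnth_mktuple.
  by rewrite -E -aj; apply: IH (esym aj).
have [t tT] : exists t, t \in T by apply/set0Pn; rewrite -card_gt0 cardT.
by move/ffunP/(_ t): E; rewrite !ffunE tT.
Qed.

Lemma exists_onto n (T : {set 'I_n}) : k <= #|T| ->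
  exists p : 'I_n -> 'I_k, forall i, exists2 l, l \in T & p l = i.
Proof.
move=> leTk; have [x0 x0T] : exists x0, x0 \in T.
  by apply/set0Pn; rewrite -card_gt0 (leq_trans _ leTk).
exists (fun l => inord (minn (enum_rank_in x0T l) m.+1)) => i.
have lt_iT : i < #|T| by apply: leq_trans leTk.
exists (enum_val (Ordinal lt_iT)); first exact: enum_valP.
have lt_ik := ltn_ord i.
rewrite enum_valK_in; apply: val_inj; rewrite /= inordK; lia.
Qed.

Lemma hop_partition n (T : {set 'I_n}) (p : 'I_n -> 'I_k) l :
  hop (fun i => ind [set x in T | p x != i] l) = ind T l.
Proof.
rewrite ffunE; case: ifP => lT.
  by apply/hop_eq1; exists (p l) => j; rewrite ffunE !inE lT eq_sym; case: eqP.
by apply/hop_eq0 => j; rewrite ffunE inE lT.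
Qed.

Lemma ind_generated n (S : {set {ffun 'I_n -> carrier cube_alg}}) :
  (forall T : {set 'I_n}, #|T| <= m.+1 -> ind T \in S) ->
  forall T, in_sg S (ind T).
Proof.
move=> small_S T; have [N] := ubnP #|T|; elim: N T => // N IH T ltTN.
case: (leqP #|T| m.+1) => [leTk | ltkT]; first by apply: sg_base; apply: small_S.
have [p p_onto] := exists_onto ltkT.
apply: (in_sg_hop (args := fun i => ind [set x in T | p x != i])); last first.
  by move=> l; apply: hop_partition.
move=> i; apply: IH; rewrite -ltnS; apply: leq_trans ltTN; apply: proper_card.
have [l lT pl] := p_onto i; apply/properP; split.
  by apply/subsetP => x; rewrite inE => /andP[].
by exists l; rewrite // inE pl eqxx andbF.
Qed.

Lemma small_ind_generates n (S : {set {ffun 'I_n -> carrier cube_alg}}) :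
  (forall T : {set 'I_n}, #|T| <= m.+1 -> ind T \in S) -> generates S.
Proof.
move=> small_S v.
pose args (i : 'I_k) :=
  if i == ord0 then ind [set l | v l == two3] else ind [set l | v l != zero3].
apply: (in_sg_hop (args := args)) => [i | l].
  by rewrite /args; case: ifP => _; apply: ind_generated.
rewrite /args; case: (ord3P (v l)) => vl; rewrite vl.
- by apply/hop_eq0 => i; case: ifP; rewrite ffunE inE vl.
- by apply/hop_eq1; exists ord0 => i; case: ifP; rewrite ffunE inE vl.
- by apply: hop_ones => i; case: ifP; rewrite ffunE inE vl.
Qed.

Lemma bin_leq_dA n : 'C(n, m.+1) <= dA cube_alg n.
Proof.
apply: leq_dA => S gS.
rewrite -{1}[n]card_ord -card_draws -(card_imset _ (@ind_inj n)).
apply/subset_leq_card/subsetP => a /imsetP[T]; rewrite inE => /eqP cardT ->.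
exact: ind_mem_generators.
Qed.

Lemma dA_leq_exp n : dA cube_alg n <= n.+1 ^ m.+1.
Proof.
pose S : {set {ffun 'I_n -> carrier cube_alg}} :=
  [set ind [set i | Some i \in codom f] | f : {ffun 'I_(m.+1) -> option 'I_n}].
have gS : generates S.
  apply: small_ind_generates => T /set_codom_option[f ->].
  exact: imset_f.
apply: leq_trans (dA_le_card gS) _; apply: leq_trans (leq_imset_card _ _) _.
by rewrite card_ffun card_option !card_ord.
Qed.

End CubeAlgebra.

Theorem theorem5p8 :
  forall k : nat, 2 <= k ->
  exists A : algebra,
    0 < #|carrier A| /\
    has_1pointed_cube_term A k /\
    (exists (c1 c2 N : nat), 0 < c1 /\ 0 < c2 /\
       forall n : nat, N <= n ->
         n ^ (k - 1) <= c1 * dA A n /\ dA A n <= c2 * n ^ (k - 1)).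
Proof.
move=> k le2k; have [m ->] : exists m, k = m.+2 by exists (k - 2); lia.
exists (cube_alg m); split; first by rewrite card_ord.
split; first exact: cube_alg_cube_term.
exists (2 ^ m.+1 * m.+1`!), (2 ^ m.+1), (2 * m.+1).
split; first by rewrite muln_gt0 expn_gt0 fact_gt0.
split; first by rewrite expn_gt0.
move=> n le2kn; rewrite subn1 /=; split.
  apply: leq_trans (leq_exp_bin le2kn) _.
  by rewrite leq_mul2l bin_leq_dA orbT.
apply: leq_trans (dA_leq_exp m n) _.
by rewrite -expnMn leq_exp2r //; lia.
Qed.
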